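(* Let $R$ be a commutative ring which is free as an abelian group with $\mathbb{Z}$-basis $V$, let $n\ge2$, $p$ a prime, and let $\mathfrak{g}=\mathfrak{sl}_n(\mathbb{F}_p[V])$. Then the first Lie algebra homology of $\mathrm{gr}_*(\Gamma(SL_n(R),p))$ is $$H_1(\mathrm{gr}_*(\Gamma(SL_n(R),p)))=(\mathfrak{g}\otimes_{\mathbb{F}_p}\langle t\rangle)\oplus\Big(\bigoplus_{i\ge2}H_1(\mathfrak{g})\otimes_{\mathbb{F}_p}\langle t^i\rangle\Big),$$ where $\langle t^i\rangle$ is the one-dimensional $\mathbb{F}_p$-span of $t^i$.
   Context: $\mathbb{F}_p[V]=R\otimes_{\mathbb{Z}}\mathbb{Z}/p=R/pR$; $\mathfrak{sl}_n(\mathbb{F}_p[V])$ is the Lie algebra of traceless $n\times n$ matrices over $R/pR$ with bracket $AB-BA$. For a Lie algebra $\mathfrak{h}$ over $\mathbb{F}_p$, $H_1(\mathfrak{h})=\mathfrak{h}/[\mathfrak{h},\mathfrak{h}]$. $\Gamma_r=\Gamma(SL_n(R),p^r)=\ker(SL_n(R)\to SL_n(R/p^rR))$, and $\mathrm{gr}_*(\Gamma(SL_n(R),p))=\bigoplus_{r\ge1}\Gamma_r/\Gamma_{r+1}$ (each summand an $\mathbb{F}_p$-vector space) with Lie bracket induced bilinearly by the group commutator $g^{-1}h^{-1}gh$, which maps $\Gamma_r/\Gamma_{r+1}\times\Gamma_s/\Gamma_{s+1}\to\Gamma_{r+s}/\Gamma_{r+s+1}$. *)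

From HB Require Import structures.
From mathcomp Require Import all_boot all_order all_algebra.
Unset Printing Implicit Defensive.
Import GRing.Theory.
Local Open Scope ring_scope.

Definition Zbasis {R : pzRingType} (V : R -> Prop) : Prop :=
  (forall x : R, exists (s : seq R) (c : R -> int),
      (forall v, v \in s -> V v) /\ x = \sum_(v <- s) v *~ c v) /\
  (forall (s : seq R) (c : R -> int), uniq s -> (forall v, v \in s -> V v) ->
      \sum_(v <- s) v *~ c v = 0 -> forall v, v \in s -> c v = 0).

(* Gamma_r = Gamma(SL_n(R), p^r) = ker(SL_n(R) -> SL_n(R/p^r R)). *)
Definition Gamma {R : comPzRingType} (n p r : nat) (A : 'M[R]_n) : Prop :=
  \det A = 1 /\ exists B : 'M[R]_n, A = 1%:M + ((p ^ r)%N)%:R *: B.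

(* group commutator g^-1 h^-1 g h in SL_n(R); the inverse of a determinant-1
   matrix is its adjugate. *)
Definition mxcomm {R : comPzRingType} (n : nat) (g h : 'M[R]_n) : 'M[R]_n :=
  \adj g *m \adj h *m g *m h.

Inductive gen_subgroup {R : comPzRingType} (n : nat) (X : 'M[R]_n -> Prop)
  : 'M[R]_n -> Prop :=
| gs_gen A : X A -> gen_subgroup n X A
| gs_one : gen_subgroup n X 1%:M
| gs_mul A B : gen_subgroup n X A -> gen_subgroup n X B -> gen_subgroup n X (A *m B)
| gs_inv A : gen_subgroup n X A -> gen_subgroup n X (\adj A).

(* Preimage in Gamma_r of the degree-r part of [gr, gr]: the subgroup generated
   by Gamma_{r+1} and the commutators [g,h], g in Gamma_s, h in Gamma_{r-s},
   1 <= s <= r-1.  Hence the degree-r part of H_1(gr) is Gamma_r / Ncomm r. *)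
Definition Ncomm {R : comPzRingType} (n p r : nat) : 'M[R]_n -> Prop :=
  gen_subgroup n (fun A => Gamma n p r.+1 A \/
     exists (s : nat) (g h : 'M[R]_n),
       [/\ (1 <= s)%N, (s < r)%N, Gamma n p s g, Gamma n p (r - s) h
         & A = mxcomm n g h]).

(* phi induces an isomorphism of groups Gamma_r / Ncomm r  ~=  {y in M | T y}
   (T an additive subgroup of the zmodType M):
   phi is a homomorphism Gamma_r -> T, onto T, with kernel Ncomm r. *)
Definition gr_H1_piece_iso {R : comPzRingType} (n p r : nat)
  (M : zmodType) (T : M -> Prop) (phi : 'M[R]_n -> M) : Prop :=
  [/\ forall x, Gamma n p r x -> T (phi x),
      forall x y, Gamma n p r x -> Gamma n p r y -> phi (x *m y) = phi x + phi y,
      forall y, T y -> exists x, Gamma n p r x /\ phi x = y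
    & forall x, Gamma n p r x -> (phi x = 0 <-> Ncomm n p r x)].

Definition sl {S : comPzRingType} (n : nat) (A : 'M[S]_n) : Prop := \tr A = 0.

(* [g,g] for g = sl_n(S): additive span (= F_p-span in characteristic p)
   of the brackets XY - YX, X, Y in sl_n(S). *)
Inductive bracket_span {S : comPzRingType} (n : nat) : 'M[S]_n -> Prop :=
| bs_gen X Y : sl n X -> sl n Y -> bracket_span n (X *m Y - Y *m X)
| bs_zero : bracket_span n 0
| bs_add A B : bracket_span n A -> bracket_span n B -> bracket_span n (A + B)
| bs_opp A : bracket_span n A -> bracket_span n (- A).

(* q : sl_n(S) -> Q presents Q as H_1(sl_n(S)) = sl_n(S)/[sl_n(S), sl_n(S)]:
   q is additive on sl_n(S), onto Q, with kernel [g,g]. *)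
Definition H1_sl_presentation {S : comPzRingType} (n : nat)
  (Q : zmodType) (q : 'M[S]_n -> Q) : Prop :=
  [/\ forall A B, sl n A -> sl n B -> q (A + B) = q A + q B,
      forall y, exists A, sl n A /\ q A = y
    & forall A, sl n A -> (q A = 0 <-> bracket_span n A)].

From HB Require Import structures.
From mathcomp Require Import all_boot all_algebra fingroup perm.
From mathcomp Require Import ring.
From Stdlib Require Import ClassicalEpsilon.
Set Implicit Arguments.
Unset Strict Implicit.
Unset Printing Implicit Defensive.

Import GRing.Theory.
Local Open Scope ring_scope.

(* For k >= 1 every A in Gamma_k is 1 + p^k B with B unique, R being
   torsion-free, and A |-> B mod p is a homomorphism Gamma_k -> sl_n(F_p[V])
   with kernel Gamma_(k+1); it lands in sl_n because
   det (1 + p^k B) = 1 + p^k tr B mod p^(2k), and it is onto because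
   transvections and their conjugates lift the elementary traceless matrices.
   The commutator of 1 + p^s X and 1 + p^t Y is 1 + p^(s+t) [X, Y] modulo
   p^(s+t+1), so leading terms turn group commutators into Lie brackets.  In
   degree 1 there are no commutators, so Gamma_1 / Gamma_2 = g; in degree
   r >= 2 every bracket [X, Y] is the leading term of a commutator of
   Gamma_1 and Gamma_(r-1), so the degree-r part of H_1 is g / [g, g]. *)

Definition torsion_free (M : zmodType) :=
  forall (m : nat) (x : M), (0 < m)%N -> x *+ m = 0 -> x = 0.

Lemma Zbasis_uniq_repr (R : pzRingType) (V : R -> Prop) (x : R) : Zbasis V ->
  exists (s : seq R) (c : R -> int),
    [/\ uniq s, forall v, v \in s -> V v & x = \sum_(v <- s) v *~ c v].
Proof.
move=> [span _]; have [s [c [sV ->]]] := span x.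
exists (undup s), (fun v => c v * (count_mem v s)%:Z); split.
- exact: undup_uniq.
- by move=> v; rewrite mem_undup; apply: sV.
rewrite -big_undup_iterop_count; apply: eq_bigr => v _.
by rewrite Monoid.iteropE iter_addr_0 mulrzA.
Qed.

Lemma Zbasis_torsion_free (R : pzRingType) (V : R -> Prop) :
  Zbasis V -> torsion_free R.
Proof.
move=> ZV m x m_gt0; have [s [c [s_uniq sV ->]]] := Zbasis_uniq_repr x ZV.
have [_ free] := ZV; rewrite -sumrMnl => sum0.
have c0 : forall v, v \in s -> c v * m%:Z = 0.
  apply: (free s (fun v => c v * m%:Z)) => //; rewrite -[RHS]sum0.
  by apply: eq_bigr => v _; rewrite mulrzA.
rewrite big_seq big1 // => v /c0 /eqP; rewrite mulf_eq0 orbC eqz_nat.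
by rewrite eqn0Ngt m_gt0 => /eqP ->.
Qed.

Section UnipotentAlgebra.
Variables (R : comPzRingType) (n : nat).
Implicit Types (a b : R) (X Y A : 'M[R]_n).

Lemma prod_one_addM (I : Type) (r : seq I) a (F : I -> R) :
  exists y, \prod_(i <- r) (1 + a * F i) = 1 + a * \sum_(i <- r) F i + a * a * y.
Proof.
elim: r => [|x r [y IH]]; first by exists 0; rewrite !big_nil; ring.
exists (F x * \sum_(i <- r) F i + y + a * F x * y).
by rewrite !big_cons IH; ring.
Qed.

(* Every non-identity permutation moves at least two indices, so its term in
   the Leibniz expansion of det (1 + a X) is divisible by a^2. *)
Lemma det_one_addZ a X :
  exists y, \det (1%:M + a *: X) = 1 + a * \tr X + a * a * y.
Proof.
have offdiag i j : i != j -> (1%:M + a *: X) i j = a * X i j.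
  by move=> ij; rewrite !mxE (negbTE ij) add0r.
rewrite /determinant (bigD1 1%g) //= odd_perm1 expr0 mul1r.
have [y ->] : exists y, \prod_i (1%:M + a *: X) i ((1%g : 'S_n) i)
    = 1 + a * \tr X + a * a * y.
  have [y Hy] := prod_one_addM (index_enum 'I_n) a (fun i => X i i).
  exists y; rewrite -Hy; apply: eq_bigr => i _.
  by rewrite perm1 !mxE eqxx.
have [z ->] : exists z, \sum_(s : 'S_n | s != 1%g) (-1) ^+ s *
    \prod_i (1%:M + a *: X) i (s i) = a * a * z.
  apply: (big_ind (fun x => exists y, x = a * a * y)).
  - by exists 0; ring.
  - by move=> _ _ [y1 ->] [y2 ->]; exists (y1 + y2); ring.
  move=> s s1; have [i si] : exists i, s i != i.
    apply/existsP; apply: contraR s1 => /existsPn fix_s.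
    by apply/eqP/permP => i; rewrite perm1; apply/eqP/negPn.
  have ssi : s (s i) != s i by rewrite (inj_eq (@perm_inj _ s)).
  rewrite (bigD1 i) //= (bigD1 (s i)) /=; last by rewrite si.
  rewrite !offdiag 1?eq_sym //.
  move: (_ ^+ _) (\prod_(k | _) _) (X i (s i)) (X (s i) (s (s i))) => u v b1 b2.
  by exists (u * b1 * b2 * v); ring.
by exists (y + z); ring.
Qed.

Lemma mul_one_addZ a X Y :
  (1%:M + a *: X) *m (1%:M + a *: Y) = 1%:M + a *: (X + Y + a *: (X *m Y)).
Proof.
rewrite mulmxDl !mulmxDr !mul1mx !mulmx1 -!scalemxAl -!scalemxAr !scalerDr.
by rewrite !scalerA -!addrA; congr (_ + _); rewrite addrCA.
Qed.

Lemma adj_one_addZ a A X :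
  \det A = 1 -> A = 1%:M + a *: X -> \adj A = 1%:M + a *: (- (\adj A *m X)).
Proof.
move=> detA defA; have := mul_adj_mx A.
by rewrite detA {2}defA mulmxDr mulmx1 -scalemxAr scalerN => <-; rewrite addrK.
Qed.

Lemma det_adj1 A : \det A = 1 -> \det (\adj A) = 1.
Proof.
move=> detA; have := congr1 determinant (mul_mx_adj A).
by rewrite det_mulmx detA mul1r det1.
Qed.

Lemma mxcomm_one_addZ a b (g h X Y : 'M[R]_n) :
  \det g = 1 -> \det h = 1 -> g = 1%:M + a *: X -> h = 1%:M + b *: Y ->
  mxcomm n g h = 1%:M + (a * b) *: (\adj g *m \adj h *m (X *m Y - Y *m X)).
Proof.
move=> detg deth defg defh.
have gh : g *m h = h *m g + (a * b) *: (X *m Y - Y *m X).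
  rewrite defg defh !mulmxDl !mulmxDr !mul1mx !mulmx1 -!scalemxAl -!scalemxAr.
  rewrite !scalerA scalerBr (mulrC b a).
  move: (_ *: (X *m Y)) (_ *: (Y *m X)) (a *: X) (b *: Y) => u v x y.
  by rewrite [u - v]addrC !addrA addrK (addrAC 1%:M y x).
rewrite /mxcomm -!mulmxA gh mulmxDr mulmxDr !mulmxA.
rewrite -(mulmxA (\adj g) (\adj h) h) mul_adj_mx deth mulmx1 mul_adj_mx detg.
by rewrite -!scalemxAr.
Qed.

Lemma det_transvection_lt (c : R) (i j : 'I_n) :
  (j < i)%N -> \det (1%:M + c *: delta_mx i j : 'M[R]_n) = 1.
Proof.
move=> ji; have ij : (i == j) = false := gtn_eqF ji.
rewrite det_trig.
  rewrite big1 // => k _; rewrite !mxE eqxx.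
  by case: (k =P i) => [-> | _]; rewrite ?ij /= mulr0 addr0.
apply/forallP => k; apply/forallP => l; apply/implyP => kl.
have kl' : (k == l) = false := ltn_eqF kl.
rewrite !mxE kl'; case: (k =P i) => [ki | _]; last by rewrite /= mulr0 addr0.
case: (l =P j) => [lj | _]; last by rewrite /= mulr0 addr0.
by move: kl; rewrite ki lj => /(ltn_trans ji); rewrite ltnn.
Qed.

Lemma det_transvection (c : R) (i j : 'I_n) :
  i != j -> \det (1%:M + c *: delta_mx i j : 'M[R]_n) = 1.
Proof.
move=> ij; case: (ltngtP i j) => [lt_ij | lt_ji | eq_ij].
- by rewrite -det_tr linearD /= linearZ /= trmx1 trmx_delta det_transvection_lt.
- exact: det_transvection_lt.
- by move: ij; rewrite (val_inj eq_ij) eqxx.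
Qed.

Lemma transvection_conj (c : R) (i j : 'I_n) : i != j ->
  (1%:M - delta_mx j i) *m (1%:M + c *: delta_mx i j) *m (1%:M + delta_mx j i) =
  1%:M + c *: (delta_mx i i + delta_mx i j - delta_mx j i - delta_mx j j).
Proof.
move=> ij.
rewrite !(mulmxDl, mulmxBl, mulmxDr, mulmxBr, mul1mx, mulmx1, mulNmx).
rewrite -?(scalemxAl, scalemxAr) !(mul_delta_mx_cond, eqxx, mulr1n) (negbTE ij) mulr0n.
by apply/matrixP => k l; rewrite !mxE; ring.
Qed.

End UnipotentAlgebra.

Lemma scalemx_nat_inj (R : pzRingType) (n m : nat) (B1 B2 : 'M[R]_n) :
  torsion_free R -> (0 < m)%N -> m%:R *: B1 = m%:R *: B2 -> B1 = B2.
Proof.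
move=> R_tf m_gt0 eqB; apply/matrixP => i j; apply/eqP; rewrite -subr_eq0.
apply/eqP/(R_tf m _ m_gt0).
have := congr1 (fun M : 'M[R]_n => M i j) eqB; rewrite !mxE => e.
by rewrite -mulr_natl mulrBr e subrr.
Qed.

Section CongruenceSubgroups.
Variables (R : comPzRingType) (n p : nat).
Implicit Types (A B g h : 'M[R]_n).

Lemma Gamma1 k : Gamma n p k (1%:M : 'M[R]_n).
Proof. by split; [rewrite det1 | exists 0; rewrite scaler0 addr0]. Qed.

Lemma GammaM k A B : Gamma n p k A -> Gamma n p k B -> Gamma n p k (A *m B).
Proof.
move=> [detA [X defA]] [detB [Y defB]]; split.
  by rewrite det_mulmx detA detB mulr1.
by rewrite defA defB mul_one_addZ; eexists.
Qed.

Lemma Gamma_adj k A : Gamma n p k A -> Gamma n p k (\adj A).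
Proof.
move=> [detA [X defA]]; split; first exact: det_adj1.
by rewrite (adj_one_addZ detA defA); eexists.
Qed.

Lemma GammaS k A : Gamma n p k.+1 A -> Gamma n p k A.
Proof.
move=> [detA [X defA]]; split => //; exists (p%:R *: X).
by rewrite defA scalerA -natrM expnS mulnC.
Qed.

Lemma Gamma_comm s t g h :
  Gamma n p s g -> Gamma n p t h -> Gamma n p (s + t) (mxcomm n g h).
Proof.
move=> [detg [X defg]] [deth [Y defh]]; split.
  by rewrite /mxcomm !det_mulmx !det_adj1 // detg deth !mulr1.
by rewrite (mxcomm_one_addZ detg deth defg defh) -natrM -expnD; eexists.
Qed.

Lemma Ncomm_Gamma r A : Ncomm n p r A -> Gamma n p r A.
Proof.
elim=> [B [/GammaS // | [s [g [h [_ lt_sr Gg Gh ->]]]]] | | B C _ GB _ GC | B _ GB].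
- by have := Gamma_comm Gg Gh; rewrite subnKC // ltnW.
- exact: Gamma1.
- exact: GammaM.
- exact: Gamma_adj.
Qed.

Lemma Ncomm1_Gamma2 A : Ncomm n p 1 A -> Gamma n p 2 A.
Proof.
elim=> [B [// | [s [g [h [s_ge1 s_lt1 _ _ _]]]]] | | B C _ GB _ GC | B _ GB].
- by move: (leq_trans s_ge1 s_lt1); rewrite ltnn.
- exact: Gamma1.
- exact: GammaM.
- exact: Gamma_adj.
Qed.

End CongruenceSubgroups.

Section LeadingTerm.
Variables (R S : comPzRingType) (pi : {rmorphism R -> S}) (n p : nat).
Hypotheses (R_tf : torsion_free R) (p_gt0 : (0 < p)%N) (p_eq0 : p%:R = 0 :> S).
Hypothesis pi_surj : forall y : S, exists x, pi x = y.
Hypothesis ker_pi : forall x : R, pi x = 0 -> exists y, x = p%:R * y.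
Implicit Types (A B g h : 'M[R]_n) (X Y Z : 'M[S]_n).

(* For A = 1 + p^k B in Gamma_k, the class of B modulo p; B is unique because
   R is torsion-free, so the choice below is irrelevant. *)
Definition lead k A : 'M[S]_n :=
  map_mx pi (epsilon (inhabits 0) (fun B => A = 1%:M + (p ^ k)%N%:R *: B)).

Lemma leadE k A B : A = 1%:M + (p ^ k)%N%:R *: B -> lead k A = map_mx pi B.
Proof.
move=> defA; rewrite /lead; congr (map_mx pi _).
have := epsilon_spec (inhabits 0) (fun B => A = 1%:M + (p ^ k)%N%:R *: B)
  (ex_intro _ B defA).
rewrite {1}defA.
by move/addrI/(scalemx_nat_inj R_tf); rewrite expn_gt0 p_gt0 => /(_ isT).
Qed.

Lemma lead1 k : lead k 1%:M = 0.
Proof. by rewrite (leadE (B := 0)) ?map_mx0 // scaler0 addr0. Qed.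

Lemma pi_expn_eq0 k : (0 < k)%N -> pi (p ^ k)%N%:R = 0.
Proof. by rewrite rmorph_nat natrX p_eq0 expr0n; case: k. Qed.

Lemma leadM k A B : (0 < k)%N -> Gamma n p k A -> Gamma n p k B ->
  lead k (A *m B) = lead k A + lead k B.
Proof.
move=> k_gt0 [_ [X defA]] [_ [Y defB]].
rewrite (leadE defA) (leadE defB) defA defB (leadE (mul_one_addZ _ _ _)).
by rewrite !map_mxD map_mxZ pi_expn_eq0 // scale0r addr0.
Qed.

Lemma lead_adj k A : (0 < k)%N -> Gamma n p k A -> lead k (\adj A) = - lead k A.
Proof.
move=> k_gt0 GA; have GA' := Gamma_adj GA.
by apply/eqP; rewrite -addr_eq0 -leadM // mul_adj_mx (proj1 GA) lead1.
Qed.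

Lemma lead_eq0 k A : Gamma n p k A -> lead k A = 0 <-> Gamma n p k.+1 A.
Proof.
move=> [detA [X defA]]; rewrite (leadE defA); split => [piX0 | [_ [Y defA']]].
  have divX i j : exists y, X i j = p%:R * y.
    by apply: ker_pi; have := congr1 (fun M : 'M[S]_n => M i j) piX0; rewrite !mxE.
  split => //; exists (\matrix_(i, j) epsilon (inhabits 0) (fun y => X i j = p%:R * y)).
  rewrite defA expnS natrM mulrC -scalerA; congr (_ + _ *: _).
  by apply/matrixP => i j; rewrite !mxE -(epsilon_spec _ _ (divX i j)).
have : (p ^ k)%N%:R *: X = (p ^ k)%N%:R *: (p%:R *: Y).
  by apply: (addrI 1%:M); rewrite -defA defA' scalerA -natrM mulnC -expnS.
move/(scalemx_nat_inj R_tf); rewrite expn_gt0 p_gt0 => /(_ isT) ->.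
by rewrite map_mxZ rmorph_nat p_eq0 scale0r.
Qed.

(* det A = 1 + p^k tr B + p^(2k) y forces tr B = - p^k y since R is torsion-free. *)
Lemma lead_sl k A : (0 < k)%N -> Gamma n p k A -> sl n (lead k A).
Proof.
move=> k_gt0 [detA [X defA]]; rewrite /sl (leadE defA) trace_map_mx.
have [y dety] := det_one_addZ (p ^ k)%N%:R X.
have : (\tr X + (p ^ k)%N%:R * y) *+ (p ^ k)%N = 0.
  by apply: (addrI 1); rewrite addr0 -[RHS]detA defA dety; ring.
move/R_tf; rewrite expn_gt0 p_gt0 => /(_ isT) /eqP; rewrite addr_eq0 => /eqP ->.
by rewrite rmorphN rmorphM pi_expn_eq0 // mul0r oppr0.
Qed.

Lemma map_adj_Gamma k g : (0 < k)%N -> Gamma n p k g -> map_mx pi (\adj g) = 1%:M.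
Proof.
move=> k_gt0 [detg [X defg]]; rewrite (adj_one_addZ detg defg).
by rewrite map_mxD map_mx1 map_mxZ pi_expn_eq0 // scale0r addr0.
Qed.

Lemma lead_comm s t g h : (0 < s)%N -> (0 < t)%N ->
  Gamma n p s g -> Gamma n p t h ->
  lead (s + t) (mxcomm n g h) = lead s g *m lead t h - lead t h *m lead s g.
Proof.
move=> s_gt0 t_gt0 Gg Gh; have [[detg [X defg]] [deth [Y defh]]] := (Gg, Gh).
have := mxcomm_one_addZ detg deth defg defh; rewrite -natrM -expnD => /leadE ->.
rewrite (leadE defg) (leadE defh) !map_mxM map_mxB !map_mxM.
by rewrite (map_adj_Gamma s_gt0 Gg) (map_adj_Gamma t_gt0 Gh) mulmx1 mul1mx.
Qed.

Definition lead_range k Y := exists A, Gamma n p k A /\ lead k A = Y.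

Lemma lead_range0 k : lead_range k 0.
Proof. by exists 1%:M; split; [apply: Gamma1 | apply: lead1]. Qed.

Lemma lead_rangeD k Y Z : (0 < k)%N ->
  lead_range k Y -> lead_range k Z -> lead_range k (Y + Z).
Proof.
move=> k_gt0 [A [GA <-]] [B [GB <-]].
by exists (A *m B); split; [apply: GammaM | apply: leadM].
Qed.

Lemma lead_rangeN k Y : (0 < k)%N -> lead_range k Y -> lead_range k (- Y).
Proof.
move=> k_gt0 [A [GA <-]].
by exists (\adj A); split; [apply: Gamma_adj | apply: lead_adj].
Qed.

Lemma lead_range_offdiag k (x : S) (i j : 'I_n) :
  i != j -> lead_range k (x *: delta_mx i j).
Proof.
move=> ij; have [y <-] := pi_surj x.
exists (1%:M + (p ^ k)%N%:R *: (y *: delta_mx i j)); split.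
  by split; [rewrite scalerA det_transvection | eexists].
by rewrite (leadE (erefl _)) map_mxZ map_delta_mx.
Qed.

Lemma lead_range_diag k (x : S) (i j : 'I_n) : (0 < k)%N ->
  i != j -> lead_range k (x *: (delta_mx i i - delta_mx j j)).
Proof.
move=> k_gt0 ij; have [y <-] := pi_surj x.
pose D : 'M[R]_n := delta_mx i i + delta_mx i j - delta_mx j i - delta_mx j j.
have rangeD : lead_range k (pi y *: map_mx pi D).
  exists (1%:M + (p ^ k)%N%:R *: (y *: D)); split; last first.
    by rewrite (leadE (erefl _)) map_mxZ.
  split; last by eexists.
  rewrite scalerA -transvection_conj // !det_mulmx det_transvection //.
  rewrite -[delta_mx j i]scale1r -scaleNr !det_transvection 1?eq_sym //.
  by rewrite !mulr1.
have ji : j != i by rewrite eq_sym.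
have -> : pi y *: (delta_mx i i - delta_mx j j) =
    pi y *: map_mx pi D + - (pi y *: delta_mx i j) + pi y *: delta_mx j i.
  rewrite /D !map_mxB map_mxD !map_delta_mx -!scalerN -!scalerDr.
  by congr (_ *: _); apply/matrixP => a b; rewrite !mxE; ring.
apply: lead_rangeD (lead_rangeD _ rangeD _) (lead_range_offdiag _ _ ji) => //.
exact: lead_rangeN (lead_range_offdiag _ _ ij).
Qed.

Lemma lead_range_sum k (I : Type) (r : seq I) (P : pred I) (F : I -> 'M[S]_n) :
  (0 < k)%N -> (forall i, P i -> lead_range k (F i)) ->
  lead_range k (\sum_(i <- r | P i) F i).
Proof.
move=> k_gt0 rangeF; apply: big_ind => //; first exact: lead_range0.
by move=> ? ?; apply: lead_rangeD.
Qed.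

(* Split Y into off-diagonal entries and the traceless diagonal parts
   Y_ii (E_ii - E_i0i0). *)
Lemma lead_range_sl k (i0 : 'I_n) Y : (0 < k)%N -> sl n Y -> lead_range k Y.
Proof.
move=> k_gt0 slY.
pose T i j := if i == j then Y i i *: (delta_mx i i - delta_mx i0 i0)
              else Y i j *: delta_mx i j.
have -> : Y = \sum_i \sum_j T i j.
  have rowT i : \sum_j T i j = \sum_j Y i j *: delta_mx i j - Y i i *: delta_mx i0 i0.
    rewrite (bigD1 i) //= [in RHS](bigD1 i) //= /T eqxx scalerBr addrAC.
    by congr (_ + _ - _); apply: eq_bigr => j ji; rewrite eq_sym (negbTE ji).
  rewrite (eq_bigr _ (fun i _ => rowT i)) sumrB -scaler_suml.
  by rewrite -/(\tr Y) slY scale0r subr0 -matrix_sum_delta.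
apply: lead_range_sum => // i _; apply: lead_range_sum => // j _; rewrite /T.
case: ifP => [/eqP -> | /negbT ij]; last exact: lead_range_offdiag.
have [-> | i0j] := eqVneq j i0; last exact: lead_range_diag.
by rewrite subrr scaler0; apply: lead_range0.
Qed.

Lemma lead_Ncomm r A : (0 < r)%N -> Ncomm n p r A -> bracket_span n (lead r A).
Proof.
move=> r_gt0; elim=> [B [GB | [s [g [h [s_gt0 lt_sr Gg Gh ->]]]]] |
    | B C NB bsB NC bsC | B NB bsB].
- by rewrite ((lead_eq0 (GammaS GB)).2 GB); apply: bs_zero.
- have rs_gt0 : (0 < r - s)%N by rewrite subn_gt0.
  have := lead_comm s_gt0 rs_gt0 Gg Gh; rewrite subnKC ?(ltnW lt_sr) // => ->.
  exact: bs_gen (lead_sl s_gt0 Gg) (lead_sl rs_gt0 Gh).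
- by rewrite lead1; apply: bs_zero.
- by rewrite (leadM r_gt0 (Ncomm_Gamma NB) (Ncomm_Gamma NC)); apply: bs_add.
- by rewrite (lead_adj r_gt0 (Ncomm_Gamma NB)); apply: bs_opp.
Qed.

(* A bracket [X, Y] is the leading term of the commutator of lifts of X to
   Gamma_1 and of Y to Gamma_(r-1). *)
Lemma bracket_span_lead_Ncomm r (i0 : 'I_n) Z : (1 < r)%N ->
  bracket_span n Z -> exists2 c, Ncomm n p r c & lead r c = Z.
Proof.
move=> r_gt1; have r_gt0 := ltnW r_gt1; have r1_gt0 : (0 < r - 1)%N by rewrite subn_gt0.
elim=> [X Y slX slY | | _ _ _ [c Nc <-] _ [d Nd <-] | _ _ [c Nc <-]].
- have [g [Gg <-]] := lead_range_sl i0 (ltnSn 0) slX.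
  have [h [Gh <-]] := lead_range_sl i0 r1_gt0 slY.
  exists (mxcomm n g h); first by apply: gs_gen; right; exists 1%N, g, h.
  by have := lead_comm (ltnSn 0) r1_gt0 Gg Gh; rewrite subnKC.
- by exists 1%:M; [apply: gs_one | apply: lead1].
- exists (c *m d); first exact: gs_mul.
  exact: leadM r_gt0 (Ncomm_Gamma Nc) (Ncomm_Gamma Nd).
- exists (\adj c); first exact: gs_inv.
  exact: lead_adj r_gt0 (Ncomm_Gamma Nc).
Qed.

(* If lead x = lead c with c in Ncomm, then c^-1 x lies in Gamma_(r+1). *)
Lemma Ncomm_of_lead_bracket r (i0 : 'I_n) x : (1 < r)%N ->
  Gamma n p r x -> bracket_span n (lead r x) -> Ncomm n p r x.
Proof.
move=> r_gt1 Gx /(bracket_span_lead_Ncomm i0 r_gt1) [c Nc lead_c].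
have r_gt0 := ltnW r_gt1; have Gc := Ncomm_Gamma Nc.
have Gcx : Gamma n p r.+1 (\adj c *m x).
  apply/(lead_eq0 (GammaM (Gamma_adj Gc) Gx)).
  by rewrite (leadM r_gt0 (Gamma_adj Gc) Gx) (lead_adj r_gt0 Gc) lead_c addNr.
have -> : x = c *m (\adj c *m x) by rewrite mulmxA mul_mx_adj (proj1 Gc) mul1mx.
by apply: gs_mul => //; apply: gs_gen; left.
Qed.

Theorem gr_H1_deg1 (i0 : 'I_n) : gr_H1_piece_iso n p 1 'M[S]_n (sl n) (lead 1).
Proof.
split=> [x | x y | Y | x Gx].
- exact: lead_sl.
- exact: leadM.
- exact: lead_range_sl.
split=> [/(lead_eq0 Gx) G2x | /Ncomm1_Gamma2 G2x]; last exact/(lead_eq0 Gx).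
by apply: gs_gen; left.
Qed.

Theorem gr_H1_deg_ge2 (i0 : 'I_n) r (Q : zmodType) (q : 'M[S]_n -> Q) :
  (1 < r)%N -> H1_sl_presentation n Q q ->
  gr_H1_piece_iso n p r Q (fun _ => True) (fun A => q (lead r A)).
Proof.
move=> r_gt1 [qD q_surj q_ker]; have r_gt0 := ltnW r_gt1.
split=> [// | x y Gx Gy | y _ | x Gx].
- by rewrite leadM // qD //; apply: lead_sl.
- have [Y [slY <-]] := q_surj y.
  by have [x [Gx <-]] := lead_range_sl i0 r_gt0 slY; exists x.
rewrite q_ker; last exact: lead_sl.
split; first exact: Ncomm_of_lead_bracket.
exact: lead_Ncomm.
Qed.

End LeadingTerm.

Theorem corollary2p5 (R : comPzRingType) (V : R -> Prop) (n p : nat)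
  (S : comPzRingType) (pi : {rmorphism R -> S}) :
  Zbasis V -> (2 <= n)%N -> prime p ->
  (* S together with pi is F_p[V] = R/pR *)
  (forall y : S, exists x : R, pi x = y) ->
  (forall x : R, pi x = 0 <-> exists y : R, x = p%:R * y) ->
  (* degree 1: H_1(gr)_1 = Gamma_1/Gamma_2 ~= g = sl_n(F_p[V]) *)
  (exists phi : 'M[R]_n -> 'M[S]_n,
      gr_H1_piece_iso n p 1 'M[S]_n (sl n) phi) /\
  (* degree r >= 2: H_1(gr)_r ~= H_1(g) *)
  (forall r : nat, (2 <= r)%N ->
   forall (Q : zmodType) (q : 'M[S]_n -> Q), H1_sl_presentation n Q q ->
   exists phi : 'M[R]_n -> Q, gr_H1_piece_iso n p r Q (fun _ => True) phi).
Proof.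
move=> ZV n_ge2 p_prime pi_surj ker_pi.
have R_tf := Zbasis_torsion_free ZV.
have p_gt0 := prime_gt0 p_prime.
have p_eq0 : p%:R = 0 :> S by rewrite -(rmorph_nat pi); apply/ker_pi; exists 1; rewrite mulr1.
have ker_pi_sub x : pi x = 0 -> exists y, x = p%:R * y by move/ker_pi.
pose i0 : 'I_n := Ordinal (ltnW n_ge2).
split; first by eexists; apply: gr_H1_deg1.
by move=> r r_ge2 Q q qH1; eexists; apply: gr_H1_deg_ge2 qH1.
Qed.
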